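(* Let $A \subset \mathbb{Z}^d$ be a finite set whose convex hull is a $d$-dimensional simplex with vertices $v_1, \ldots, v_{d+1}$, where $v_{d+1} = 0$. For $v \in \mathbb{Z}^d$ write $\widetilde{v} = (v,1)$. Let $\mathcal{C}_A = \{\sum_{a \in A} n_a \widetilde{a} : n_a \in \mathbb{N}\}$ and $\Lambda = \mathrm{span}_{\mathbb{Z}}\{\widetilde{v}_1, \ldots, \widetilde{v}_{d+1}\}$. For each $i$, let $\mathcal{C}_i = \{\sum_{a \in A} n_a (a - v_i, 1) : n_a \in \mathbb{N}\}$ and $\Lambda_i = \mathrm{span}_{\mathbb{Z}}\{(v_j - v_i, 1) : 1 \leq j \leq d+1\}$. Fix $\pi \in \mathbb{Z}^{d+1}$, let $\mathcal{S}_\pi$ be the set of points of $\mathcal{C}_A$ congruent to $\pi$ modulo $\Lambda$, and for each $i$ and $\rho \in \mathbb{Z}^{d+1}$ let $\mathcal{S}_{\rho,i}$ be the set of points of $\mathcal{C}_i$ congruent to $\rho$ modulo $\Lambda_i$. A point $(g,H) \in \mathcal{S}_\pi$ is a minimal element of $\mathcal{S}_\pi$ if $(g,H) - \widetilde{v}_j \notin \mathcal{C}_A$ for all $j$; a point $(g,H) \in \mathcal{S}_{\rho,i}$ is a minimal element of $\mathcal{S}_{\rho,i}$ if $(g,H) - (v_j - v_i, 1) \notin \mathcal{C}_i$ for all $j$. Suppose the minimal elements of $\mathcal{S}_\pi$ are $(g_1,H_1), \ldots, (g_n,H_n)$. Then for any $1 \leq i \leq d$, the set $\mathcal{S}_{\pi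 - \widetilde{v}_i, i}$ has exactly $n$ minimal elements, and they can be enumerated as $(g^1, H^1), \ldots, (g^n, H^n)$ with \[ g^j = g_j - H_j v_i \quad \text{and} \quad H^j = H_j \qquad \text{for all } j \leq n. \]
   Context: $\mathbb{N} = \{0,1,2,\ldots\}$; points of $\mathbb{Z}^{d+1}$ are written $(g,H)$ with $g \in \mathbb{Z}^d$, $H \in \mathbb{Z}$. *)

From mathcomp Require Import all_boot all_order all_algebra.
Set Implicit Arguments. Unset Strict Implicit. Unset Printing Implicit Defensive.
Import Order.TTheory GRing.Theory Num.Theory.
Local Open Scope ring_scope.

Definition pt (d : nat) := ('rV[int]_d * int)%type.

Definition tl (d : nat) (v : 'rV[int]_d) : pt d := (v, 1).

Definition in_cone (d : nat) (gs : seq (pt d)) (p : pt d) : Prop :=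
  exists n : 'I_(size gs) -> nat, p = \sum_(k < size gs) (gs`_k *+ n k).

Definition in_lattice (d : nat) (gs : seq (pt d)) (p : pt d) : Prop :=
  exists z : 'I_(size gs) -> int, p = \sum_(k < size gs) (gs`_k *~ z k).

Definition toQ (d : nat) (v : 'rV[int]_d) : 'rV[rat]_d := map_mx (fun z : int => z%:~R) v.

Definition in_conv (d : nat) (S : seq 'rV[int]_d) (x : 'rV[rat]_d) : Prop :=
  exists c : 'I_(size S) -> rat,
    (forall k, 0 <= c k) /\ \sum_(k < size S) c k = 1 /\
    x = \sum_(k < size S) c k *: toQ S`_k.

Definition aff_indep (d : nat) (v : 'I_d.+1 -> 'rV[int]_d) : Prop :=
  forall c : 'I_d.+1 -> rat,
    \sum_j c j *: toQ (v j) = 0 -> \sum_j c j = 0 -> forall j, c j = 0.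

Definition simplex_hull (d : nat) (A : seq 'rV[int]_d) (v : 'I_d.+1 -> 'rV[int]_d) : Prop :=
  aff_indep v /\
  (forall x, in_conv A x <-> in_conv [seq v j | j <- enum 'I_d.+1] x).

Definition CA (d : nat) (A : seq 'rV[int]_d) : seq (pt d) := [seq tl a | a <- A].
Definition LamA (d : nat) (v : 'I_d.+1 -> 'rV[int]_d) : seq (pt d) :=
  [seq tl (v j) | j <- enum 'I_d.+1].
Definition Ci (d : nat) (A : seq 'rV[int]_d) (v : 'I_d.+1 -> 'rV[int]_d) (i : 'I_d.+1)
  : seq (pt d) := [seq (a - v i, 1) | a <- A].
Definition Lami (d : nat) (v : 'I_d.+1 -> 'rV[int]_d) (i : 'I_d.+1) : seq (pt d) :=
  [seq (v j - v i, 1) | j <- enum 'I_d.+1].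

Definition minimal_S (d : nat) (A : seq 'rV[int]_d) (v : 'I_d.+1 -> 'rV[int]_d)
  (pi p : pt d) : Prop :=
  [/\ in_cone (CA A) p, in_lattice (LamA v) (p - pi)
    & forall j, ~ in_cone (CA A) (p - tl (v j))].

Definition minimal_Si (d : nat) (A : seq 'rV[int]_d) (v : 'I_d.+1 -> 'rV[int]_d)
  (i : 'I_d.+1) (rho p : pt d) : Prop :=
  [/\ in_cone (Ci A v i) p, in_lattice (Lami v i) (p - rho)
    & forall j, ~ in_cone (Ci A v i) (p - (v j - v i, 1))].

From HB Require Import structures.
From mathcomp Require Import all_boot all_order all_algebra.
Set Implicit Arguments. Unset Strict Implicit. Unset Printing Implicit Defensive.
Import Order.TTheory GRing.Theory Num.Theory.
Local Open Scope ring_scope.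

(* The shear (g, H) |-> (g - H v_i, H) is an additive automorphism of Z^{d+1}
   sending (a, 1) to (a - v_i, 1).  It therefore maps C_A onto C_i, Lambda onto
   Lambda_i and the minimality conditions of S_pi onto those of S_{rho,i}, with
   rho the image of pi.  Since v_{d+1} = 0, the points (0,1) and (v_i,0) lie in
   Lambda, so pi and the preimage of pi - (v_i,1) are congruent modulo Lambda
   and define the same S_pi. *)

Section Shear.
Variables (d : nat) (w : 'rV[int]_d).

Definition shear (p : pt d) : pt d := (p.1 - p.2 *: w, p.2).

Lemma shear_is_zmod_morphism : zmod_morphism shear.
Proof.
case=> a b [c e]; congr (_, _) => /=.
by rewrite scalerBl !opprB addrACA [RHS]addrACA [- c + _]addrC.
Qed.

HB.instance Definition _ := GRing.isZmodMorphism.Build (pt d) (pt d) shear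
  shear_is_zmod_morphism.

Lemma shear_tl (a : 'rV[int]_d) : shear (tl a) = (a - w, 1).
Proof. by rewrite /shear /= scale1r. Qed.

End Shear.

Lemma shearK d (w : 'rV[int]_d) : cancel (shear w) (shear (- w)).
Proof. by case=> a b; rewrite /shear /= scalerN opprK subrK. Qed.

Lemma shearNK d (w : 'rV[int]_d) : cancel (shear (- w)) (shear w).
Proof. by move=> p; rewrite -{1}[w]opprK shearK. Qed.

Lemma shear_inj d (w : 'rV[int]_d) : injective (shear w).
Proof. exact: can_inj (shearK w). Qed.

Lemma shearN_subr d (w : 'rV[int]_d) (p : pt d) :
  shear (- w) p - p = (tl w - tl 0) *~ p.2.
Proof.
case: p => a b; rewrite [RHS]surjective_pairing !raddfMz !raddfB /shear /tl /=.
congr (_, _) => /=; last by rewrite !subrr mul0rz.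
by rewrite scalerN opprK addrAC subrr add0r subr0 -scaler_int intz.
Qed.

Section ConeLattice.
Variables (d e : nat) (f : {additive pt d -> pt e}).

Lemma nth_map_additive (gs : seq (pt d)) k : (map f gs)`_k = f gs`_k.
Proof.
have [lt_k | le_k] := ltnP k (size gs); first by rewrite (nth_map 0).
by rewrite !nth_default ?size_map // raddf0.
Qed.

Hypothesis f_inj : injective f.

Lemma in_cone_map (gs : seq (pt d)) (p : pt d) :
  in_cone (map f gs) (f p) <-> in_cone gs p.
Proof.
rewrite /in_cone size_map.
have fsum n : f (\sum_(k < size gs) gs`_k *+ n k)
    = \sum_(k < size gs) (map f gs)`_k *+ n k.
  by rewrite raddf_sum; apply: eq_bigr => k _; rewrite nth_map_additive raddfMn.
by split=> -[n eq_p]; exists n; [apply: f_inj; rewrite fsum | rewrite eq_p fsum].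
Qed.

Lemma in_lattice_map (gs : seq (pt d)) (p : pt d) :
  in_lattice (map f gs) (f p) <-> in_lattice gs p.
Proof.
rewrite /in_lattice size_map.
have fsum z : f (\sum_(k < size gs) gs`_k *~ z k)
    = \sum_(k < size gs) (map f gs)`_k *~ z k.
  by rewrite raddf_sum; apply: eq_bigr => k _; rewrite nth_map_additive raddfMz.
by split=> -[z eq_p]; exists z; [apply: f_inj; rewrite fsum | rewrite eq_p fsum].
Qed.

End ConeLattice.

Section Lattice.
Variables (d : nat) (gs : seq (pt d)).

Lemma in_lattice_mem (p : pt d) : p \in gs -> in_lattice gs p.
Proof.
rewrite -index_mem => lt_p; exists (fun k => (k == Ordinal lt_p)%:Z).
rewrite (bigD1 (Ordinal lt_p)) //= eqxx mulr1z nth_index -?index_mem //.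
by rewrite big1 ?addr0 // => k /negbTE->; rewrite mulr0z.
Qed.

Lemma in_latticeB (p q : pt d) :
  in_lattice gs p -> in_lattice gs q -> in_lattice gs (p - q).
Proof.
move=> [z ->] [z' ->]; exists (fun k => z k - z' k).
by rewrite -sumrB; apply: eq_bigr => k _; rewrite mulrzBr.
Qed.

Lemma in_latticeMz (p : pt d) (c : int) : in_lattice gs p -> in_lattice gs (p *~ c).
Proof.
move=> [z ->]; exists (fun k => z k * c).
by rewrite mulrz_suml; apply: eq_bigr => k _; rewrite mulrzA.
Qed.

Lemma in_lattice_addr (x p : pt d) :
  in_lattice gs x -> in_lattice gs (p + x) <-> in_lattice gs p.
Proof.
move=> gs_x; split=> [gs_px | gs_p]; first by rewrite -(addrK x p); apply: in_latticeB.
have -> : p + x = p - x *~ -1 by rewrite mulrN1z opprK.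
by apply: in_latticeB => //; apply: in_latticeMz.
Qed.

End Lattice.

Section Minimal.
Variables (d : nat) (A : seq 'rV[int]_d) (v : 'I_d.+1 -> 'rV[int]_d).

Lemma minimal_S_congr (pi pi' p : pt d) :
  in_lattice (LamA v) (pi' - pi) -> minimal_S A v pi p <-> minimal_S A v pi' p.
Proof.
move=> L_pi; have eq_p : p - pi = (p - pi') + (pi' - pi) by rewrite addrA subrK.
by rewrite /minimal_S eq_p; split=> -[? /(in_lattice_addr _ L_pi) ? ?].
Qed.

Variable i : 'I_d.+1.

Lemma Ci_shear : Ci A v i = map (shear (v i)) (CA A).
Proof. by rewrite -map_comp; apply: eq_map => a /=; rewrite shear_tl. Qed.

Lemma Lami_shear : Lami v i = map (shear (v i)) (LamA v).
Proof. by rewrite -map_comp; apply: eq_map => a /=; rewrite shear_tl. Qed.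

Lemma minimal_Si_shear (rho p : pt d) :
  minimal_Si A v i (shear (v i) rho) (shear (v i) p) <-> minimal_S A v rho p.
Proof.
have cone_shear q : in_cone (Ci A v i) (shear (v i) q) <-> in_cone (CA A) q.
  by rewrite Ci_shear; apply/in_cone_map/shear_inj.
have lattice_shear q : in_lattice (Lami v i) (shear (v i) q) <-> in_lattice (LamA v) q.
  by rewrite Lami_shear; apply/in_lattice_map/shear_inj.
have shear_gen j : shear (v i) p - (v j - v i, 1) = shear (v i) (p - tl (v j)).
  by rewrite -shear_tl raddfB.
rewrite /minimal_Si /minimal_S -raddfB.
split=> -[/cone_shear C /lattice_shear L min_p]; split=> // j.
  by move=> /cone_shear; rewrite -shear_gen; apply: min_p.
by rewrite shear_gen => /cone_shear; apply: min_p.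
Qed.

Lemma tl_in_LamA j : in_lattice (LamA v) (tl (v j)).
Proof. by apply/in_lattice_mem/map_f; rewrite mem_enum. Qed.

Lemma shear_preimage_congr (pi : pt d) : v ord_max = 0 ->
  in_lattice (LamA v) (shear (- v i) (pi - tl (v i)) - pi).
Proof.
move=> v0; set rho := pi - tl (v i).
have -> : shear (- v i) rho - pi = (shear (- v i) rho - rho) - tl (v i).
  by rewrite /rho [RHS]addrAC opprB addrA subrK.
rewrite shearN_subr -v0; apply: in_latticeB; last exact: tl_in_LamA.
by apply/in_latticeMz/in_latticeB; apply: tl_in_LamA.
Qed.

End Minimal.

Theorem lemma4p2 (d : nat) (A : seq 'rV[int]_d) (v : 'I_d.+1 -> 'rV[int]_d)
  (pi : pt d) (s : seq (pt d)) :
  simplex_hull A v ->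
  v ord_max = 0 ->
  uniq s ->
  (forall p, p \in s <-> minimal_S A v pi p) ->
  forall i : 'I_d.+1, i != ord_max ->
    let s' := [seq (p.1 - p.2 *: v i, p.2) | p <- s] in
    uniq s' /\
    (forall p, p \in s' <-> minimal_Si A v i (pi - tl (v i)) p).
Proof.
move=> _ v0 uniq_s s_min i _ s'.
have -> : s' = map (shear (v i)) s by [].
split; first by rewrite map_inj_uniq //; exact: shear_inj.
move=> p; have [q ->] : exists q, p = shear (v i) q.
  by exists (shear (- v i) p); rewrite shearNK.
rewrite -[pi - _](shearNK (v i)) mem_map; last exact: shear_inj.
apply: iff_trans (s_min q) _.
apply: iff_trans (minimal_S_congr A q (shear_preimage_congr i pi v0)) _.
exact: iff_sym (minimal_Si_shear _ _ _ _ _).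
Qed.
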